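(* Let $G$ be a finite group, let $K$ be a normal solvable subgroup of $G$, and let $p \in \pi(G)$. If $d_G(p) < |H(p,G)|$, then $p \notin \pi(K)$.
   Context: For a finite group $X$, $\pi(X)$ is the set of prime divisors of $|X|$, and for a positive integer $a$, $\pi(a)$ is the set of prime divisors of $a$. The prime graph $GK(G)$ of $G$ has vertex set $\pi(G)$, with distinct vertices $p,q$ adjacent iff $G$ contains an element of order $pq$; $d_G(p)$ denotes the degree of the vertex $p$ in $GK(G)$. For $p \in \pi(G)$, $w_G(p) = \max\{ i : p^i \mid |G|\}$. For $p\in\pi(G)$ with $m = w_G(p)$, define $$\theta(p) = \pi(G) \setminus \Big(\{p\} \cup \bigcup_{i=1}^{m} \pi(p^i-1)\Big), \qquad \bar\theta(p) = \pi(G)\setminus\big(\{p\}\cup \pi(p^m-1)\big),$$ and $$H(p,G) = \{ q \in \theta(p) \;:\; p \in \bar\theta(q)\}.$$ *)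

From mathcomp Require Import all_boot all_fingroup all_solvable.
Set Implicit Arguments. Unset Strict Implicit. Unset Printing Implicit Defensive.

Section PrimeGraph.
Variable gT : finGroupType.
Implicit Types G : {group gT}.

Definition piG G : seq nat := primes #|G|.

Definition gk_adj G (p q : nat) : bool :=
  (p != q) && [exists x in G, #[x]%g == p * q].

Definition gk_deg G (p : nat) : nat := count (gk_adj G p) (piG G).

Definition wG G (p : nat) : nat := logn p #|G|.

Definition theta G (p : nat) : seq nat :=
  [seq q <- piG G | (q != p) &&
     [forall i : 'I_(wG G p), q \notin primes (p ^ i.+1 - 1)]].

Definition thetabar G (p : nat) : seq nat :=
  [seq q <- piG G | (q != p) && (q \notin primes (p ^ wG G p - 1))].

Definition Hset G (p : nat) : seq nat :=
  [seq q <- theta G p | p \in thetabar G q].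

End PrimeGraph.

(** Suppose [p] divides [|K|]. For every [q] in [H(p,G)] we produce an element
    of order [pq] in [G]; since [H(p,G)] is contained in [pi(G)], this makes
    every element of [H(p,G)] a neighbour of [p] in [GK(G)], so
    [|H(p,G)| <= d_G(p)].

    The element of order [pq] comes from a coprime action with a fixed point.
    Let [N = O_p'(K)], normal in [G], and [S] a Sylow [q]-subgroup of [G].
    If [S <= N], the Frattini argument gives [p | |N_G(S)|]; an element of
    order [p] in [N_G(S)] acts on [S], and as [p] does not divide
    [|S| - 1 = q^(w_G(q)) - 1] it centralises some [s <> 1] of [S].  Otherwise
    some [q]-element [y] of [S] survives in [G/N], where it acts on
    [V = O_p(K/N)], which is non-trivial because [K/N] is solvable with
    [O_p'(K/N) = 1]; as [|V| = p^k] with [1 <= k <= w_G(p)], [q] does not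
    divide [|V| - 1] and [y] centralises some [v <> 1] of [V]. *)
From mathcomp Require Import all_boot all_fingroup all_solvable.
Set Implicit Arguments. Unset Strict Implicit. Unset Printing Implicit Defensive.

Section ElementsOfOrderPQ.
Variable gT : finGroupType.
Implicit Types G K N S V : {group gT}.
Local Open Scope group_scope.

Lemma exists_elt_order_dvd G (g : gT) d :
  g \in G -> (d %| #[g])%N -> exists2 x, x \in G & #[x] = d.
Proof.
move=> Gg /dvdnP[k def_g]; exists (g ^+ k); first by rewrite groupX.
have k_gt0 : (0 < k)%N by case: k def_g (order_gt0 g) => [->|].
by rewrite orderXdiv def_g ?dvdn_mulr // mulKn.
Qed.

(* The fixed points of a [q]-element acting on [V] are [1 mod q] in number. *)
Lemma pelt_cent1_nontrivial V (y : gT) q :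
  prime q -> q.-elt y -> y \in 'N(V) -> ~~ (q %| #|V| - 1)%N ->
  exists2 v, v \in V & v != 1 /\ commute v y.
Proof.
move=> q_pr qy nVy q'V1.
have actsV : [acts <[y]>, on V | 'J] by rewrite astabsJ cycle_subG.
have := pgroup_fix_mod qy actsV; rewrite afixJ cent_cycle => V_mod.
have [CVy1 | /trivgPn[v /setIP[Vv /cent1P cvy] ntv]] := eqVneq 'C_V[y] 1.
  move: V_mod q'V1; rewrite CVy1 cards1 => /eqP.
  by rewrite eqn_mod_dvd ?cardG_gt0 // => ->.
by exists v.
Qed.

Lemma prime_mul_dvd_orderM p q (v y : gT) :
  prime p -> prime q -> p != q -> p.-elt v -> q.-elt y ->
  v != 1 -> y != 1 -> commute v y -> (p * q %| #[v * y])%N.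
Proof.
move=> p_pr q_pr pq pv qy ntv nty cvy.
have q_p' : {subset pred1 q <= p^'} by move=> r /eqP->; rewrite !inE eq_sym.
rewrite orderM ?(sub_pnat_coprime q_p') //.
by apply: dvdn_mul;
  [rewrite -(pdiv_p_elt pv ntv) | rewrite -(pdiv_p_elt qy nty)]; apply: pdiv_dvd.
Qed.

Lemma exists_elt_order_mul G V (y : gT) p q :
  prime p -> prime q -> p != q -> p.-group V -> V \subset G ->
  y \in G -> q.-elt y -> y != 1 -> y \in 'N(V) -> ~~ (q %| #|V| - 1)%N ->
  exists2 x, x \in G & #[x] = (p * q)%N.
Proof.
move=> p_pr q_pr pq pV sVG Gy qy nty nVy q'V1.
have [v Vv [ntv cvy]] := pelt_cent1_nontrivial q_pr qy nVy q'V1.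
apply: (@exists_elt_order_dvd G (v * y)).
  by rewrite groupM // (subsetP sVG).
exact: prime_mul_dvd_orderM p_pr q_pr pq (mem_p_elt pV Vv) qy ntv nty cvy.
Qed.

Lemma dvdn_card_norm_Sylow_p'normal G N S (p r : nat) :
  N <| G -> p^'.-group N -> r.-Sylow(N) S -> prime p -> (p %| #|G|)%N ->
  (p %| #|'N_G(S)|)%N.
Proof.
move=> nsNG p'N sylS p_pr pG.
have: (p %| #|N| * #|'N_G(S)|)%N.
  by rewrite mul_cardG (Frattini_arg nsNG sylS) dvdn_mulr.
by move: p'N; rewrite Euclid_dvdM // /pgroup p'natE // => /negPf->.
Qed.

Lemma pcore_quotient_pcore'_neq1 K (p : nat) :
  solvable K -> prime p -> (p %| #|K|)%N -> 'O_p(K / 'O_p^'(K)) != 1.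
Proof.
move=> solK p_pr pK.
have solKb := quotient_sol 'O_p^'(K) solK.
rewrite -(Fitting_eq_pcore (trivg_pcore_quotient _ _)) trivg_Fitting //.
rewrite -subG1 quotient_sub1 ?gFnorm //; apply: contraL pK => sKO.
by rewrite -p'natE //; apply: pgroupS sKO (pcore_pgroup _ _).
Qed.

Lemma exists_elt_order_morphim (rT : finGroupType) (D : {group gT})
    (f : {morphism D >-> rT}) G (x : rT) :
  x \in f @* G -> exists2 g, g \in G & #[g] = #[x].
Proof.
case/morphimP=> g Dg Gg ->; apply: exists_elt_order_dvd Gg _.
exact: morph_order.
Qed.

End ElementsOfOrderPQ.

Section NormalSolvable.
Variable gT : finGroupType.
Local Open Scope group_scope.
Variables (G K : {group gT}) (p q : nat).
Hypotheses (nsKG : K <| G) (solK : solvable K) (pK : (p %| #|K|)%N).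
Hypotheses (p_pr : prime p) (q_pr : prime q) (pq : p != q).

Let N := 'O_p^'(K)%G.
Let nsNG : N <| G := gFnormal_trans _ nsKG.

Lemma exists_elt_order_pq_Sylow_sub_p'core (S : {group gT}) :
  q.-Sylow(G) S -> S \subset N -> ~~ (p %| q ^ logn q #|G| - 1)%N ->
  exists2 x, x \in G & #[x] = (p * q)%N.
Proof.
move=> sylS sSN p'S1.
have pG : (p %| #|G|)%N := dvdn_trans pK (cardSg (normal_sub nsKG)).
have sylSN : q.-Sylow(N) S := pHall_subl sSN (normal_sub nsNG) sylS.
have pNGS := dvdn_card_norm_Sylow_p'normal nsNG (pcore_pgroup _ _) sylSN p_pr pG.
have [x /setIP[Gx nSx] ox] := Cauchy p_pr pNGS.
have px : p.-elt x by rewrite /p_elt ox pnat_id.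
have ntx : x != 1 by rewrite -order_gt1 ox prime_gt1.
rewrite mulnC; apply: exists_elt_order_mul q_pr p_pr _ (pHall_pgroup sylS)
  (pHall_sub sylS) Gx px ntx nSx _; first by rewrite eq_sym.
by rewrite (card_Hall sylS) p_part.
Qed.

Lemma exists_elt_order_pq_outside_p'core (y : gT) :
  y \in G -> q.-elt y -> y \notin N ->
  (forall k, 0 < k -> k <= logn p #|G| -> ~~ (q %| p ^ k - 1))%N ->
  exists2 x, x \in G & #[x] = (p * q)%N.
Proof.
move=> Gy qy N'y q'p1.
have nNy : y \in 'N(N) := subsetP (normal_norm nsNG) y Gy.
set V := 'O_p(K / N).
have nsVGb : V <| G / N := gFnormal_trans _ (quotient_normal N nsKG).
have pV : p.-group V := pcore_pgroup _ _.
have [_ _ [m oV]] := pgroup_pdiv pV (pcore_quotient_pcore'_neq1 solK p_pr pK).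
have q'V1 : ~~ (q %| #|V| - 1)%N.
  rewrite oV q'p1 // -(pfactorK m.+1 p_pr) -oV.
  apply: dvdn_leq_log; rewrite ?cardG_gt0 //.
  apply: dvdn_trans (cardSg (pcore_sub _ _)) _.
  exact: dvdn_trans (dvdn_quotient _ _) (cardSg (normal_sub nsKG)).
have [xb Gxb <-] : exists2 xb, xb \in G / N & #[xb] = (p * q)%N.
  apply: exists_elt_order_mul p_pr q_pr pq pV (normal_sub nsVGb)
    (mem_quotient N Gy) _ _ _ q'V1.
  - exact: morph_p_elt.
  - by apply: contraNneq N'y => /coset_idr; apply.
  exact: subsetP (normal_norm nsVGb) _ (mem_quotient N Gy).
exact: exists_elt_order_morphim Gxb.
Qed.

Lemma exists_elt_order_pq :
  (q %| #|G|)%N -> ~~ (p %| q ^ logn q #|G| - 1)%N ->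
  (forall k, 0 < k -> k <= logn p #|G| -> ~~ (q %| p ^ k - 1))%N ->
  exists2 x, x \in G & #[x] = (p * q)%N.
Proof.
move=> qG p'q1 q'p1; have [S sylS] := Sylow_exists q G.
have [sSN | /subsetPn[y Sy N'y]] := boolP (S \subset N).
  exact: exists_elt_order_pq_Sylow_sub_p'core sylS sSN p'q1.
apply: exists_elt_order_pq_outside_p'core N'y q'p1.
  exact: subsetP (pHall_sub sylS) y Sy.
exact: mem_p_elt (pHall_pgroup sylS) Sy.
Qed.

End NormalSolvable.

Section PrimeGraph.
Variable gT : finGroupType.
Implicit Types G : {group gT}.

Lemma expn_sub1_gt0 p k : prime p -> 0 < k -> 0 < p ^ k - 1.
Proof.
by move=> p_pr k_gt0; rewrite subn_gt0 -{1}(expn0 p) ltn_exp2l ?prime_gt1.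
Qed.

Lemma mem_HsetP G p q :
  q \in Hset G p ->
  [/\ prime q, q %| #|G|, p != q,
      forall k, 0 < k -> k <= wG G p -> ~~ (q %| p ^ k - 1)
    & ~~ (p %| q ^ wG G q - 1)].
Proof.
rewrite !mem_filter /piG => /andP[/andP[/andP[pq p'q] pG] /andP[/andP[_ q'p] qG]].
move: pG qG; rewrite !mem_primes => /and3P[p_pr _ _] /and3P[q_pr _ qG].
have wq_gt0 : 0 < wG G q by rewrite /wG logn_gt0 mem_primes q_pr cardG_gt0.
split=> // [[|k] // _ le_k|].
- by move/forallP/(_ (Ordinal le_k)): q'p; rewrite mem_primes q_pr expn_sub1_gt0.
- by move: p'q; rewrite mem_primes p_pr expn_sub1_gt0.
Qed.

Lemma size_Hset_le_gk_deg G p :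
  {in Hset G p, forall q, gk_adj G p q} -> size (Hset G p) <= gk_deg G p.
Proof.
move/allP; rewrite all_count => /eqP <-.
rewrite /Hset /theta -filter_predI count_filter /gk_deg.
by apply: sub_count => x /andP[].
Qed.

End PrimeGraph.

Theorem theorem2p12 (gT : finGroupType) (G K : {group gT}) (p : nat) :
  (K <| G)%g -> solvable K -> p \in piG G ->
  gk_deg G p < size (Hset G p) ->
  p \notin piG K.
Proof.
move=> nsKG solK _; apply: contraTN => /[!mem_primes] /and3P[p_pr _ pK].
rewrite -leqNgt; apply: size_Hset_le_gk_deg => q /mem_HsetP[q_pr qG pq q'p p'q].
have [x Gx ox] := exists_elt_order_pq nsKG solK pK p_pr q_pr pq qG p'q q'p.
by rewrite /gk_adj pq; apply/existsP; exists x; rewrite Gx ox eqxx.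
Qed.
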